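(* Let $k\ge 2$, let $V=\{(i_1,\ldots,i_{k-1}) : 1\le i_j\le k \text{ for all } j\}$, and for $j=1,\ldots,k-1$ let $\mathcal{H}_j$ be the $k$-uniform hypergraph on $V$ whose edges are the $k$-element sets $\{v^1,\ldots,v^k\}\subseteq V$ with $\{v^1_j,\ldots,v^k_j\}=\{1,\ldots,k\}$ (the $j$-th coordinates are pairwise distinct). Then each $\mathcal{H}_j$ admits a polychromatic $k$-coloring, and the chromatic number of $\bigcup_{j=1}^{k-1}\mathcal{H}_j$ equals $k$ (in particular it has no proper $(k-1)$-coloring).
   Context: A $k$-coloring of a hypergraph is a map from its vertex set to $\{1,\ldots,k\}$; it is polychromatic if every edge contains vertices of all $k$ colors, and proper if every edge with at least two vertices contains two vertices of different colors. The chromatic number is the smallest $k$ admitting a proper $k$-coloring. The union of hypergraphs on a common vertex set has as edge set the union of their edge sets. *)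

From mathcomp Require Import all_boot.
Set Implicit Arguments. Unset Strict Implicit. Unset Printing Implicit Defensive.

Definition hypergraph (T : finType) := {set {set T}}.

(* A c-coloring is a map T -> 'I_c (colors {1..c} encoded as {0..c-1}). *)
Definition polychromatic (T : finType) (c : nat) (H : hypergraph T) (f : T -> 'I_c) : Prop :=
  forall e, e \in H -> forall col : 'I_c, exists2 v, v \in e & f v = col.

Definition proper_coloring (T : finType) (c : nat) (H : hypergraph T) (f : T -> 'I_c) : Prop :=
  forall e, e \in H -> 1 < #|e| -> exists u, exists2 v, (u \in e) && (v \in e) & f u != f v.

Definition chromatic_number_eq (T : finType) (H : hypergraph T) (n : nat) : Prop :=
  (exists f : T -> 'I_n, proper_coloring H f) /\
  (forall m, m < n -> ~ exists f : T -> 'I_m, proper_coloring H f).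

Definition hunion (T : finType) (I : finType) (P : pred I) (H : I -> hypergraph T) : hypergraph T :=
  \bigcup_(i | P i) H i.

Definition Vk (k : nat) := {ffun 'I_(k.-1) -> 'I_k}.

Definition Hj (k : nat) (j : 'I_(k.-1)) : hypergraph (Vk k) :=
  [set e : {set Vk k} | (#|e| == k) && (#|[set (v : Vk k) j | v in e]| == k)].

From mathcomp Require Import all_boot.
Set Implicit Arguments. Unset Strict Implicit. Unset Printing Implicit Defensive.

(* Colouring v by its j-th coordinate is polychromatic for H_j, since every
   edge of H_j takes all k values at coordinate j.  A vertex has only k - 1
   coordinates, so it misses some value; colouring each vertex by a missing
   value is proper for the union: if an edge of H_j were monochromatic of
   colour c, the vertex of the edge with j-th coordinate c would not miss c.
   Conversely, let f use m < k colours.  If some colour class takes every value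
   at some coordinate j, then it contains an edge of H_j.  Otherwise each
   colour c avoids a value a(c, j) at each coordinate j; since m <= k - 1 we
   can assign to each coordinate j a colour c_j, every colour being used, and
   the vertex w with w_j = a(c_j, j) can get no colour at all. *)

Lemma color_class_onto_coord (J C T : finType) (s : J -> C) (f : {ffun J -> T} -> C) :
  (forall c, exists j, s j = c) ->
  exists c j, forall x, exists2 v, f v = c & v j = x.
Proof.
move=> s_onto.
have [/existsP[c /existsP[j /forallP cover]] | no_cover] :=
  boolP [exists c, exists j, [forall x, [exists v, (f v == c) && (v j == x)]]].
  exists c, j => x.
  by have /existsP[v /andP[/eqP fv /eqP vj]] := cover x; exists v.
have avoided c j : exists x, forall v, f v = c -> v j != x.
  move/existsPn/(_ c)/existsPn/(_ j)/forallPn: no_cover => [x /existsPn no_v].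
  by exists x => v fv; have := no_v v; rewrite fv eqxx.
have [a aP] := fin_all_exists (fun c => fin_all_exists (avoided c)).
pose w := [ffun j => a (s j) j].
have [j sj] := s_onto (f w).
by have := aP (f w) j w erefl; rewrite ffunE sj eqxx.
Qed.

Lemma exists_missing_value_map (J T : finType) : #|J| < #|T| ->
  exists f : {ffun J -> T} -> T, forall v, f v \notin codom v.
Proof.
move=> ltJT.
have missing (v : {ffun J -> T}) : exists x, x \notin codom v.
  have le_codom : #|codom v| <= #|J| by rewrite -(size_codom v) card_size.
  have /card_gt0P[x] : 0 < #|[predC codom v]|.
    by rewrite -(leq_add2l #|codom v|) cardC addn1 (leq_ltn_trans le_codom).
  by rewrite inE; exists x.
have [f f_missing] := fin_all_exists missing.
by exists f.
Qed.

Section CoordinateHypergraphs.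

Variable k : nat.
Implicit Types (j : 'I_k.-1) (v : Vk k) (e : {set Vk k}).

Lemma Hj_proj j e : e \in Hj j -> [set (v : Vk k) j | v in e] = setT.
Proof.
rewrite inE => /andP[_ /eqP card_proj]; apply/eqP.
by rewrite eqEcard subsetT cardsT card_ord card_proj leqnn.
Qed.

Lemma polychromatic_Hj j : polychromatic (Hj j) (fun v => v j).
Proof.
move=> e He x.
have /imsetP[v ev ->] : x \in [set (v : Vk k) j | v in e] by rewrite Hj_proj.
by exists v.
Qed.

Lemma Hj_monochromatic_edge m (f : Vk k -> 'I_m) c j :
  (forall x, exists2 v, f v = c & v j = x) ->
  exists2 e, e \in Hj j & {in e, forall v, f v = c}.
Proof.
move=> /fin_all_exists2[g fg gj].
have g_inj : injective g by move=> x y gxy; rewrite -[x]gj -[y]gj gxy.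
have proj_full : [set (v : Vk k) j | v in g @: setT] = setT.
  apply/setP => x; rewrite inE; apply/imsetP; exists (g x); last by rewrite gj.
  exact: imset_f.
exists (g @: setT).
  by rewrite inE proj_full card_imset // !cardsT card_ord !eqxx.
by move=> _ /imsetP[x _ ->]; apply: fg.
Qed.

Lemma missing_value_proper (f : Vk k -> 'I_k) :
  (forall v, f v \notin codom v) -> proper_coloring (hunion predT (@Hj k)) f.
Proof.
move=> f_missing e /bigcupP[j _ He] card_e.
have [u eu] : exists u, u \in e by apply/card_gt0P; apply: ltnW.
have /imsetP[v ev vj] : f u \in [set (v : Vk k) j | v in e] by rewrite Hj_proj.
exists v, u; first by rewrite ev eu.
by apply: contraNneq (f_missing v) => ->; rewrite vj codom_f.
Qed.

Lemma no_proper_coloring_lt m : 1 < k -> m < k ->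
  ~ exists f : Vk k -> 'I_m, proper_coloring (hunion predT (@Hj k)) f.
Proof.
case: m => [|m] lt1k ltmk [f f_proper].
  by case: (f [ffun => Ordinal (ltnW lt1k)]).
have s_onto (c : 'I_m.+1) : exists j : 'I_k.-1, inord j = c.
  have ltck : c < k.-1 by rewrite -ltnS prednK ?(leq_ltn_trans _ ltmk).
  by exists (Ordinal ltck); apply: val_inj; rewrite /= inordK.
have [c [j /Hj_monochromatic_edge[e He e_mono]]] := color_class_onto_coord f s_onto.
have Ue : e \in hunion predT (@Hj k) by apply/bigcupP; exists j.
have card_e : 1 < #|e| by move: He; rewrite inE => /andP[/eqP ->].
have [u [v /andP[eu ev]]] := f_proper e Ue card_e.
by rewrite !e_mono ?eqxx.
Qed.

End CoordinateHypergraphs.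

Theorem mainTheorem2 (k : nat) (hk : 2 <= k) :
  (forall j : 'I_(k.-1), exists f : Vk k -> 'I_k, polychromatic (Hj j) f) /\
  chromatic_number_eq (hunion predT (@Hj k)) k.
Proof.
split=> [j|]; first by exists (fun v => v j); apply: polychromatic_Hj.
split; last by move=> m; apply: no_proper_coloring_lt.
have [f f_missing] : exists f : Vk k -> 'I_k, forall v, f v \notin codom v.
  by apply: exists_missing_value_map; rewrite !card_ord ltn_predL ltnW.
by exists f; apply: missing_value_proper.
Qed.
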